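(* Let $\mathfrak{g}$ be a finite-dimensional complex Lie algebra having property $F$. Then $\mathfrak{g}$ does not admit a periodic prederivation.
   Context: A Lie algebra $\mathfrak{g}$ has property $F$ if every basis of $\mathfrak{g}$ contains three distinct elements $x_1,x_2,x_3$ such that for all $i\neq j$ in $\{1,2,3\}$ one has $[x_i,[x_i,x_j]]\neq 0$ or $[x_j,[x_j,x_i]]\neq 0$. A linear map $P:\mathfrak{g}\to\mathfrak{g}$ is a prederivation if $P([x,[y,z]])=[P(x),[y,z]]+[x,[P(y),z]]+[x,[y,P(z)]]$ for all $x,y,z\in\mathfrak{g}$; it is periodic if $P^m=\mathrm{id}$ for some integer $m\ge 1$. *)

From HB Require Import structures.
From mathcomp Require Import all_boot all_order all_algebra.
From mathcomp Require Import reals.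
From mathcomp.real_closed Require Import complex.
Set Implicit Arguments. Unset Strict Implicit. Unset Printing Implicit Defensive.
Import Order.TTheory GRing.Theory Num.Theory.
Local Open Scope ring_scope.

Definition is_lie_bracket (K : fieldType) (V : vectType K) (br : V -> V -> V) : Prop :=
  [/\ (forall (a : K) (x y z : V), br (a *: x + y) z = a *: br x z + br y z),
      (forall (a : K) (x y z : V), br z (a *: x + y) = a *: br z x + br z y),
      (forall x : V, br x x = 0) &
      (forall x y z : V, br x (br y z) + br y (br z x) + br z (br x y) = 0)].

Definition cond_F (K : fieldType) (V : vectType K) (br : V -> V -> V) (x y : V) : Prop :=
  br x (br x y) != 0 \/ br y (br y x) != 0.

Definition property_F (K : fieldType) (V : vectType K) (br : V -> V -> V) : Prop :=
  forall X : seq V, basis_of fullv X ->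
    exists x1 x2 x3 : V,
      [/\ x1 \in X, x2 \in X & x3 \in X] /\
      [/\ x1 != x2, x1 != x3 & x2 != x3] /\
      [/\ cond_F br x1 x2, cond_F br x1 x3 & cond_F br x2 x3].

Definition prederivation (K : fieldType) (V : vectType K) (br : V -> V -> V)
  (P : 'End(V)) : Prop :=
  forall x y z : V,
    P (br x (br y z)) = br (P x) (br y z) + br x (br (P y) z) + br x (br y (P z)).

Definition periodic (K : fieldType) (V : vectType K) (P : 'End(V)) : Prop :=
  exists m : nat, (1 <= m)%N /\ forall v : V, iter m P v = v.

(** A periodic endomorphism [P] of a complex vector space is diagonalizable:
    averaging [P^j v] against the powers of a primitive [m]-th root of unity
    splits every vector into eigenvectors, whose eigenvalues are roots of unity.
    If [x] and [y] are eigenvectors for [a] and [b], a prederivation maps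
    [[x,[x,y]]] to [(2a + b)[x,[x,y]]]; when this vector is nonzero, [2a + b]
    is again of modulus one, and [|a| = |b| = |2a + b| = 1] forces [b = -a].
    Property F applied to an eigenbasis then yields three eigenvalues that are
    pairwise opposite, hence [a = -a], which is absurd. *)
From HB Require Import structures.
From mathcomp Require Import all_boot all_order all_algebra.
From mathcomp Require Import cyclic separable cyclotomic.
From mathcomp Require Import reals.
From mathcomp.real_closed Require Import complex.
From mathcomp Require Import ring.
Set Implicit Arguments. Unset Strict Implicit. Unset Printing Implicit Defensive.
Import Order.TTheory GRing.Theory Num.Theory.
Local Open Scope ring_scope.

Lemma span_free_subseq (K : fieldType) (V : vectType K) (X : seq V) :
  exists Y : seq V, [/\ {subset Y <= X}, <<Y>>%VS = <<X>>%VS & free Y].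
Proof.
elim: X => [|x X [Y [sYX eYX freeY]]].
  by exists [::]; split=> //; exact: nil_free.
have [xY | xNY] := boolP (x \in <<Y>>%VS).
  exists Y; split=> //; first by move=> y /sYX; rewrite inE orbC => ->.
  by rewrite span_cons -eYX; apply/esym/addv_idPr; rewrite -memvE.
exists (x :: Y); split; last by rewrite free_cons xNY.
  by move=> y; rewrite !inE => /orP[-> // | /sYX ->]; rewrite orbT.
by rewrite !span_cons eYX.
Qed.

Lemma sum_expr_unity_root (R : idomainType) (w : R) n :
  w ^+ n = 1 -> w != 1 -> \sum_(k < n) w ^+ k = 0.
Proof.
move=> wn1 w_neq1; apply/eqP.
have /eqP := subrX1 w n; rewrite wn1 subrr eq_sym mulf_eq0 subr_eq0.
by rewrite (negbTE w_neq1).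
Qed.

Lemma closed_field_prim_root (F : closedFieldType) n :
  (0 < n)%N -> n%:R != 0 :> F -> exists z : F, n.-primitive_root z.
Proof.
move=> n_gt0 n_neq0; pose p : {poly F} := 'X^n - 1.
have [r Dp] := closed_field_poly_normal p.
rewrite (monicP _) ?monicXnsubC // scale1r in Dp.
have r_unity: all n.-unity_root r by apply/allP=> z; rewrite -root_prod_XsubC -Dp.
have size_r: (n < (size r).+1)%N by rewrite -(size_prod_XsubC r id) -Dp size_XnsubC.
have [|z _] := hasP (has_prim_root n_gt0 r_unity _ size_r); last by exists z.
by rewrite -separable_prod_XsubC -Dp separable_Xn_sub_1.
Qed.

Lemma eigenvalue_iter (K : fieldType) (V : vectType K) (P : 'End(V)) m v c :
  v != 0 -> P v = c *: v -> iter m P v = v -> c ^+ m = 1.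
Proof.
move=> v_neq0 Pv.
have iterPv j : iter j P v = c ^+ j *: v.
  elim: j => [|j IHj]; first by rewrite expr0 scale1r.
  by rewrite iterS IHj linearZ /= Pv scalerA exprSr.
rewrite iterPv => /eqP; rewrite -subr_eq0 -{2}(scale1r v) -scalerBl scaler_eq0.
by rewrite (negbTE v_neq0) orbF subr_eq0 => /eqP.
Qed.

Section PeriodicEndomorphism.
Variables (K : fieldType) (V : vectType K) (P : 'End(V)) (n : nat) (z : K).
Hypothesis z_prim : n.+1.-primitive_root z.
Hypothesis P_periodic : forall v, iter n.+1 P v = v.

Definition periodic_component k v : V :=
  \sum_(j < n.+1) (z ^+ j) ^+ k *: iter j P v.

Lemma periodic_componentP k v :
  z ^+ k *: P (periodic_component k v) = periodic_component k v.
Proof.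
rewrite /periodic_component linear_sum scaler_sumr /=.
under eq_bigr => j _ do rewrite linearZ /= scalerA -iterS -exprMn -exprS.
rewrite big_ord_recr big_ord_recl /= -[P (iter n P v)]iterS P_periodic.
by rewrite (prim_expr_order z_prim) expr0 !expr1n addrC.
Qed.

Lemma sum_periodic_component v :
  \sum_(k < n.+1) periodic_component k v = n.+1%:R *: v.
Proof.
have nontrivial_sum (j : 'I_n) : \sum_(k < n.+1) (z ^+ bump 0 j) ^+ k = 0.
  apply: sum_expr_unity_root.
    by rewrite -exprM mulnC exprM (prim_expr_order z_prim) expr1n.
  rewrite -(expr0 z) (eq_prim_root_expr z_prim) mod0n /bump /= add1n.
  by rewrite modn_small // ltnS ltn_ord.
rewrite /periodic_component exchange_big /=.
under eq_bigr => j _ do rewrite -scaler_suml.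
rewrite big_ord_recl /= [X in _ + X]big1 => [|j _]; last by rewrite nontrivial_sum scale0r.
under eq_bigr => k _ do rewrite expr0 expr1n.
by rewrite sumr_const card_ord addr0 scaler_nat.
Qed.

Hypothesis n1_neq0 : n.+1%:R != 0 :> K.

Lemma periodic_eigenbasis :
  exists X : seq V, basis_of fullv X /\ forall x, x \in X -> exists c, P x = c *: x.
Proof.
pose X := [seq periodic_component k v | k <- iota 0 n.+1, v <- vbasis fullv].
have [Y [sYX eYX freeY]] := span_free_subseq X.
exists Y; split.
  rewrite /basis_of freeY andbT eYX eqEsubv subvf /=.
  rewrite -(span_basis (vbasisP fullv)); apply/span_subvP => v v_basis.
  rewrite -[v](scale1r) -(mulVf n1_neq0) -scalerA -sum_periodic_component.
  apply/rpredZ/rpred_sum => k _; apply: memv_span; apply/allpairsP.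
  by exists (val k, v); rewrite mem_iota /= ltn_ord.
move=> y /sYX /allpairsP [[k v] [_ _ ->]] /=.
have zk_neq0 : z ^+ k != 0 by rewrite expf_neq0 // (prim_root_eq0 z_prim).
exists (z ^+ k)^-1.
by rewrite -{2}(periodic_componentP k v) scalerA mulVf // scale1r.
Qed.

End PeriodicEndomorphism.

Lemma norm_unity_root (C : numClosedFieldType) (a : C) m :
  (0 < m)%N -> a ^+ m = 1 -> `|a| = 1.
Proof.
move=> m_gt0 am1; apply/eqP.
by rewrite -(pexpr_eq1 m_gt0) ?normr_ge0 // -normrX am1 normr1.
Qed.

Lemma norm1_double_add (C : numClosedFieldType) (a b : C) :
  `|a| = 1 -> `|b| = 1 -> `|2 * a + b| = 1 -> b = - a.
Proof.
move=> na nb nab.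
have aa : a * a^* = 1 by rewrite -normCK na expr1n.
have bb : b * b^* = 1 by rewrite -normCK nb expr1n.
have abab : (2 * a + b) * (2 * a^* + b^*) = 1.
  by have := normCK (2 * a + b); rewrite nab expr1n rmorphD rmorphM /= conjC_nat.
(* Parallelogram-type identity: 2|a+b|^2 = |2a+b|^2 - 2|a|^2 + |b|^2 = 0. *)
have : 2 * ((a + b) * (a + b)^*) = 0.
  rewrite rmorphD /=; transitivity
    ((2 * a + b) * (2 * a^* + b^*) - 2 * (a * a^*) + b * b^*); first by ring.
  by rewrite abab aa bb; ring.
rewrite -normCK => /eqP; rewrite mulf_eq0 pnatr_eq0 /= expf_eq0 /= normr_eq0 addr_eq0.
by move=> /eqP ->; rewrite opprK.
Qed.

Section LieBracket.
Variables (K : fieldType) (V : vectType K) (br : V -> V -> V).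
Hypothesis br_lie : is_lie_bracket br.

Lemma lie_bracketZl a x y : br (a *: x) y = a *: br x y.
Proof.
have [brDl _ _ _] := br_lie.
have br0l : br 0 y = 0.
  apply: (@addrI _ (br 0 y)); rewrite addr0.
  by have := brDl 1 0 0 y; rewrite !scale1r addr0.
by have := brDl a x 0 y; rewrite !addr0 br0l addr0.
Qed.

Lemma lie_bracketZr a x y : br y (a *: x) = a *: br y x.
Proof.
have [_ brDr _ _] := br_lie.
have br0r : br y 0 = 0.
  apply: (@addrI _ (br y 0)); rewrite addr0.
  by have := brDr 1 0 0 y; rewrite !scale1r addr0.
by have := brDr a x 0 y; rewrite !addr0 br0r addr0.
Qed.

Lemma prederivation_bracket_eigen (P : 'End(V)) x y a b :
  prederivation br P -> P x = a *: x -> P y = b *: y ->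
  P (br x (br x y)) = (2 * a + b) *: br x (br x y).
Proof.
move=> P_pre Px Py.
rewrite P_pre Px Py !lie_bracketZl !lie_bracketZr.
by rewrite mulr_natl mulr2n !scalerDl.
Qed.

End LieBracket.

Section ComplexPeriodicPrederivation.
Variables (C : numClosedFieldType) (V : vectType C) (br : V -> V -> V).
Hypothesis br_lie : is_lie_bracket br.
Variables (P : 'End(V)) (m : nat).
Hypotheses (P_pre : prederivation br P) (m_gt0 : (0 < m)%N).
Hypothesis P_periodic : forall v, iter m P v = v.

Lemma norm_periodic_eigenvalue v c : v != 0 -> P v = c *: v -> `|c| = 1.
Proof.
move=> v_neq0 Pv; apply: (norm_unity_root m_gt0).
exact: eigenvalue_iter v_neq0 Pv (P_periodic v).
Qed.

Lemma bracket_eigen_opp x y a b : x != 0 -> y != 0 ->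
  P x = a *: x -> P y = b *: y -> br x (br x y) != 0 -> b = - a.
Proof.
move=> x_neq0 y_neq0 Px Py xxy_neq0.
apply: norm1_double_add; [exact: norm_periodic_eigenvalue Px
  | exact: norm_periodic_eigenvalue Py | ].
exact: norm_periodic_eigenvalue xxy_neq0 (prederivation_bracket_eigen br_lie P_pre Px Py).
Qed.

Lemma cond_F_eigen_opp x y a b : x != 0 -> y != 0 ->
  P x = a *: x -> P y = b *: y -> cond_F br x y -> b = - a.
Proof.
move=> x_neq0 y_neq0 Px Py [xxy_neq0 | yyx_neq0].
  exact: bracket_eigen_opp Px Py xxy_neq0.
by rewrite (bracket_eigen_opp y_neq0 x_neq0 Py Px yyx_neq0) opprK.
Qed.

Lemma not_property_F_periodic_prederivation : ~ property_F br.
Proof.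
move=> brF; have m_neq0 : m%:R != 0 :> C by rewrite pnatr_eq0 -lt0n.
have [z z_prim] := closed_field_prim_root m_gt0 m_neq0.
have [X [X_basis X_eigen]] : exists X : seq V,
    basis_of fullv X /\ forall x, x \in X -> exists c, P x = c *: x.
  move: z_prim P_periodic m_neq0; rewrite -(prednK m_gt0).
  exact: periodic_eigenbasis.
have [x1 [x2 [x3 [[x1X x2X x3X] [_ [F12 F13 F23]]]]]] := brF X X_basis.
have [[a1 P1] [a2 P2] [a3 P3]] := And3 (X_eigen _ x1X) (X_eigen _ x2X) (X_eigen _ x3X).
have [x1_neq0 x2_neq0 x3_neq0] :=
  And3 (basis_not0 X_basis x1X) (basis_not0 X_basis x2X) (basis_not0 X_basis x3X).
have a2E := cond_F_eigen_opp x1_neq0 x2_neq0 P1 P2 F12.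
have a3E := cond_F_eigen_opp x1_neq0 x3_neq0 P1 P3 F13.
have := cond_F_eigen_opp x2_neq0 x3_neq0 P2 P3 F23.
rewrite a2E a3E opprK => /eqP; rewrite eqr_oppLR -addr_eq0 -mulr2n -mulr_natl mulf_eq0.
rewrite pnatr_eq0 /= -normr_eq0 (norm_periodic_eigenvalue x1_neq0 P1).
by rewrite oner_eq0.
Qed.

End ComplexPeriodicPrederivation.

Theorem proposition5p19 (R : realType) (g : vectType R[i]) (br : g -> g -> g) :
  is_lie_bracket br -> property_F br ->
  ~ (exists P : 'End(g), prederivation br P /\ periodic P).
Proof.
move=> br_lie brF [P [P_pre [m [m_gt0 P_periodic]]]].
exact: (@not_property_F_periodic_prederivation _ g br br_lie P m P_pre m_gt0 P_periodic brF).
Qed.
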